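(* Let $k,d\geq 4$. Let $G$ be a finite $C_4$-free bipartite graph with vertex classes $A$ and $B$. Let $A=A_1\cup\dots\cup A_r$ and $B=B_1\cup\dots\cup B_s$ be partitions with $|A_i|\leq d^2$ and $|B_j|\leq d^2$ for all $i\in[r]$, $j\in[s]$. Define the graph $H$ on vertex set $\{a_1,\dots,a_r,b_1,\dots,b_s\}$ in which $a_ib_j$ is an edge exactly if $G$ has at least one edge between $A_i$ and $B_j$ (and there are no other edges). Suppose $H$ is $k$-degenerate. Then $d(G)\leq 13kd$.
   Context: $d(G)=2e(G)/|V(G)|$ is the average degree. A graph is $C_4$-free if it contains no $4$-cycle as a subgraph. A graph is $k$-degenerate if every subgraph of it has a vertex of degree at most $k$. *)

From HB Require Import structures.
From mathcomp Require Import all_boot all_order all_algebra.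
Set Implicit Arguments. Unset Strict Implicit. Unset Printing Implicit Defensive.
Import Order.TTheory GRing.Theory Num.Theory.

Definition simple_graph (T : finType) (e : rel T) : Prop :=
  irreflexive e /\ symmetric e.

Definition edge_set (T : finType) (e : rel T) : {set {set T}} :=
  [set [set x; y] | x in T, y in T & e x y].

(* average degree d(G) = 2 e(G) / |V(G)| (as a rational; 0 for empty graph) *)
Definition avg_degree (T : finType) (e : rel T) : rat :=
  ((2 * #|edge_set e|)%:R / #|T|%:R)%R.

Definition C4_free (T : finType) (e : rel T) : Prop :=
  forall v1 v2 v3 v4 : T, uniq [:: v1; v2; v3; v4] ->
    ~ [&& e v1 v2, e v2 v3, e v3 v4 & e v4 v1].

Definition bipartite_with (T : finType) (e : rel T) (A B : {set T}) : Prop :=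
  [/\ A :&: B = set0, A :|: B = [set: T] &
      forall x y, e x y -> (x \in A) && (y \in B) || (x \in B) && (y \in A)].

(* The graph H on the parts PA (vertices a_i) and PB (vertices b_j):
   X ~ Y iff one is a part of A, the other a part of B, and G has an
   edge between them. *)
Definition part_graph (T : finType) (e : rel T) (PA PB : {set {set T}}) :
  rel {set T} :=
  fun X Y => ((X \in PA) && (Y \in PB) || (X \in PB) && (Y \in PA)) &&
             [exists x in X, exists y in Y, e x y].

Definition degenerate (U : finType) (V : {set U}) (h : rel U) (k : nat) : Prop :=
  forall W : {set U}, W \subset V -> W != set0 ->
    exists2 v, v \in W & #|[set w in W | h v w]| <= k.

From HB Require Import structures.
From mathcomp Require Import all_boot all_order all_algebra.
Import Order.TTheory GRing.Theory Num.Theory.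
From mathcomp Require Import zify.
Set Implicit Arguments. Unset Strict Implicit. Unset Printing Implicit Defensive.

(* Count ordered adjacent pairs (x, y). Call such a pair heavy when x has more
   than d neighbours in the part of y, or y has more than d neighbours in the
   part of x. Two vertices of a C4-free graph have at most one common
   neighbour, so the vertices with D > d neighbours in a part Y satisfy
   d * D <= D * (D - 1), and these sum to at most |Y| * (|Y| - 1) <= d^2 |Y|:
   heavy pairs number at most 2d|V(G)|. A light pair between two adjacent parts
   X, Y of H is charged to the part removed first in a k-degenerate
   elimination order of H; each x in X has at most d light neighbours in each
   of the at most k later neighbours of X, so light pairs number at most
   2kd|V(G)|. Hence 2 e(G) <= 2(k + 1) d |V(G)| <= 13 k d |V(G)|. *)

Lemma partitionU (T : finType) (PA PB : {set {set T}}) (A B : {set T}) :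
  partition PA A -> partition PB B -> [disjoint A & B] ->
  partition (PA :|: PB) (A :|: B).
Proof.
case/and3P=> /eqP covA tA nA /and3P[/eqP covB tB nB] dAB.
have tAB : trivIset (PA :|: PB) by apply: trivIsetU; rewrite ?covA ?covB.
by rewrite /partition /cover bigcup_setU -!/(cover _) covA covB eqxx tAB inE negb_or nA.
Qed.

Lemma partitionU_mem_l (T : finType) (PA PB : {set {set T}}) (A B X : {set T})
    (x : T) :
  partition PA A -> partition PB B -> [disjoint A & B] ->
  X \in PA :|: PB -> x \in X -> x \in A -> X \in PA.
Proof.
move=> pA pB dAB /setUP[// | XB] xX xA.
have xB : x \in B by apply: subsetP (partitionS pB XB) x xX.
by rewrite (disjointFr dAB xA) in xB.
Qed.

Lemma avg_degree_le (T : finType) (e : rel T) (c : nat) :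
  2 * #|edge_set e| <= c * #|T| -> (avg_degree e <= c%:R)%R.
Proof.
rewrite /avg_degree; have [-> _ | T_gt0 le_edges] := posnP #|T|.
  by rewrite invr0 mulr0 ler0n.
by rewrite ler_pdivrMr ?ltr0n // -natrM ler_nat.
Qed.

(* [S] orients every edge along [enum_rank]; [S] and its reversal together
   contain each adjacent ordered pair exactly once. *)
Lemma double_card_edge_set_le (T : finType) (e : rel T) :
  simple_graph e -> 2 * #|edge_set e| <= \sum_x \sum_y (e x y : nat).
Proof.
move=> [irr sym]; set r := @enum_rank T.
set S := [set p : T * T | e p.1 p.2 && (r p.1 < r p.2)].
have edge_setS : edge_set e \subset (fun p : T * T => [set p.1; p.2]) @: S.
  apply/subsetP => E /imset2P[x y _]; rewrite inE => /andP[_ exy] ->.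
  case: (ltngtP (r x) (r y)) => [lt_xy | lt_yx | /val_inj/enum_rank_inj eq_xy].
  - by apply/imsetP; exists (x, y); rewrite // inE /= exy lt_xy.
  - by apply/imsetP; exists (y, x); rewrite /= 1?setUC // inE /= -sym exy lt_yx.
  - by rewrite eq_xy irr in exy.
have le_card : #|edge_set e| <= #|S|.
  exact: leq_trans (subset_leq_card edge_setS) (leq_imset_card _ _).
have cardS : #|S| = \sum_p (p \in S : nat).
  by rewrite -sum1_card big_mkcond.
have cardS_swap : #|S| = \sum_p ((p.2, p.1) \in S : nat).
  rewrite cardS (reindex_inj (h := fun p : T * T => (p.2, p.1))) /=.
    by apply: eq_bigr => -[].
  by move=> [a b] [a' b'] [-> ->].
apply: leq_trans (_ : 2 * #|S| <= _); first by rewrite leq_mul2l le_card orbT.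
rewrite mul2n -addnn {1}cardS cardS_swap -big_split pair_big /=.
apply: leq_sum => -[a b] _; rewrite !inE /= (sym b a).
by case: ltngtP; rewrite ?andbF ?andbT ?addn0.
Qed.

Lemma degenerate_sum_le (U : finType) (V : {set U}) (h : rel U) (k : nat)
    (g : U -> U -> nat) (w : U -> nat) :
  degenerate V h k -> (forall X Y, g X Y = g Y X) ->
  (forall (W : {set U}) X, W \subset V -> X \in W ->
     \sum_(Y in W) g X Y <= #|[set Y in W | h X Y]| * w X) ->
  \sum_(X in V) \sum_(Y in V) g X Y <= 2 * k * \sum_(X in V) w X.
Proof.
move=> degV gC g_row.
suff: forall n (W : {set U}), #|W| <= n -> W \subset V ->
    \sum_(X in W) \sum_(Y in W) g X Y <= 2 * k * \sum_(X in W) w X.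
  by apply.
elim=> [|n IH] W.
  by rewrite leqn0 cards_eq0 => /eqP -> _; rewrite !big_set0.
move=> cardW sWV; have [-> | W_neq0] := eqVneq W set0; first by rewrite !big_set0.
have [X0 X0W degX0] := degV W sWV W_neq0.
set W' := W :\ X0.
have cardW' : #|W'| <= n by move: cardW; rewrite (cardsD1 X0 W) X0W.
have sW'V : W' \subset V by apply: subset_trans (subsetDl _ _) sWV.
have row : \sum_(Y in W) g X0 Y <= k * w X0.
  exact: leq_trans (g_row W X0 sWV X0W) (leq_mul degX0 (leqnn _)).
have col : \sum_(X in W') g X X0 <= k * w X0.
  apply: leq_trans row; under eq_bigr do rewrite gC.
  by rewrite [leqRHS](big_setD1 X0 X0W) leq_addl.
rewrite (big_setD1 X0 X0W) [S in _ <= _ * S](big_setD1 X0 X0W) /= -/W'.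
under [S in _ + S <= _]eq_bigr do rewrite (big_setD1 X0 X0W) /= -/W'.
rewrite big_split /=; have := IH W' cardW' sW'V.
move: row col; rewrite (big_setD1 X0 X0W) /= -/W'; lia.
Qed.

Section C4FreeCounting.

Variables (T : finType) (e : rel T).
Hypotheses (e_simple : simple_graph e) (e_C4 : C4_free e).

Definition deg_in (x : T) (Y : {set T}) : nat := \sum_(y in Y) (e x y : nat).

Lemma C4_free_common_nbrs_le1 (u v : T) :
  u != v -> \sum_x (e x u && e x v : nat) <= 1.
Proof.
move=> neq_uv; have [irr sym] := e_simple.
have adj_neq a b : e a b -> a != b by apply: contraTneq => ->; rewrite irr.
case: (pickP (fun x => e x u && e x v)) => [x0 /andP[x0u x0v] | none]; last first.
  by rewrite big1 // => x _; rewrite none.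
rewrite (bigD1 x0) //= x0u x0v big1 // => x neq_xx0; apply/eqP; rewrite eqb0.
apply/negP => /andP[xu xv]; apply: (e_C4 (v1 := x0) (v2 := u) (v3 := x) (v4 := v)).
  rewrite /= !inE !negb_or (adj_neq _ _ x0u) (adj_neq _ _ x0v) eq_sym neq_xx0.
  by rewrite eq_sym (adj_neq _ _ xu) neq_uv (adj_neq _ _ xv).
by rewrite x0u (sym u x) xu xv (sym v x0) x0v.
Qed.

Lemma sum_deg_in_pairs_le (Y : {set T}) :
  \sum_x deg_in x Y * (deg_in x Y).-1 <= #|Y| * #|Y|.-1.
Proof.
have pairs x : deg_in x Y * (deg_in x Y).-1 =
    \sum_(u in Y) \sum_(v in Y | v != u) (e x u && e x v : nat).
  rewrite {1}/deg_in big_distrl /=; apply: eq_bigr => u uY.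
  rewrite /deg_in (bigD1 u uY) /=.
  by case: (e x u); [rewrite /= mul1n | rewrite mul0n big1].
under eq_bigr do rewrite pairs; rewrite exchange_big /=.
apply: leq_trans (_ : \sum_(u in Y) \sum_(v in Y | v != u) 1 <= _).
  apply: leq_sum => u _; rewrite exchange_big /=.
  by apply: leq_sum => v /andP[_ neq_vu]; apply: C4_free_common_nbrs_le1; rewrite eq_sym.
rewrite (eq_bigr (fun _ => #|Y|.-1)) ?sum_nat_const // => u uY.
by rewrite sum1_card (cardsD1 u Y) uY; apply: eq_card => v; rewrite !inE andbC.
Qed.

Lemma sum_heavy_deg_in_le (d : nat) (Y : {set T}) :
  0 < d -> #|Y| <= d ^ 2 -> \sum_x (d < deg_in x Y) * deg_in x Y <= d * #|Y|.
Proof.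
move=> d_gt0 small_Y; rewrite -(leq_pmul2l d_gt0).
apply: leq_trans (_ : \sum_x deg_in x Y * (deg_in x Y).-1 <= _).
  rewrite big_distrr /=; apply: leq_sum => x _.
  case: ltnP => [lt_d | _]; last by rewrite muln0.
  by rewrite mul1n mulnC leq_mul2l -ltnS prednK ?lt_d ?orbT // (leq_ltn_trans _ lt_d).
apply: leq_trans (sum_deg_in_pairs_le Y) _.
by rewrite mulnA mulnn mulnC leq_mul // (leq_trans (leq_pred _)).
Qed.

End C4FreeCounting.

Section PartitionedGraph.

Variables (T : finType) (e : rel T) (P : {set {set T}}) (h : rel {set T}) (k d : nat).
Hypotheses (e_simple : simple_graph e) (e_C4 : C4_free e).
Hypotheses (P_part : partition P [set: T]) (d_gt0 : 0 < d).
Hypothesis P_small : forall X, X \in P -> #|X| <= d ^ 2.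
Hypothesis h_degenerate : degenerate P h k.
Hypothesis h_edges : forall X Y x y, X \in P -> Y \in P -> x \in X -> y \in Y ->
  e x y -> h X Y.

Local Notation part x := (pblock P x).

Lemma part_eq (X : {set T}) (x : T) : X \in P -> x \in X -> part x = X.
Proof. exact: def_pblock (partition_trivIset P_part). Qed.

Lemma sum_over_parts (F : T -> nat) : \sum_x F x = \sum_(X in P) \sum_(x in X) F x.
Proof. by rewrite -(set_partition_big _ P_part); apply: eq_bigl => x; rewrite inE. Qed.

Definition heavy (x y : T) : bool :=
  (d < deg_in e x (part y)) || (d < deg_in e y (part x)).

Lemma sum_heavy_adj_le : \sum_x \sum_y (e x y && heavy x y : nat) <= 2 * d * #|T|.
Proof.
have [_ sym] := e_simple.
have one_side : \sum_x \sum_y (e x y && (d < deg_in e x (part y)) : nat) <= d * #|T|.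
  under eq_bigr do rewrite sum_over_parts.
  rewrite exchange_big -cardsT (card_partition P_part) big_distrr /=.
  apply: leq_sum => Y YP.
  apply: leq_trans (sum_heavy_deg_in_le e_simple e_C4 d_gt0 (P_small YP)).
  apply: eq_leq; apply: eq_bigr => x _; rewrite /deg_in big_distrr /=.
  by apply: eq_bigr => y yY; rewrite (part_eq YP yY); case: (e x y); case: (d < _).
apply: leq_trans (_ : \sum_x \sum_y ((e x y && (d < deg_in e x (part y)) : nat) +
                       (e y x && (d < deg_in e y (part x)) : nat)) <= _).
  apply: leq_sum => x _; apply: leq_sum => y _; rewrite /heavy (sym y x).
  by case: (e x y); case: (d < _); case: (d < _).
under eq_bigr do rewrite big_split /=.
by rewrite big_split /= [S in _ + S]exchange_big -mulnA mul2n -addnn leq_add.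
Qed.

Lemma light_row_le (W : {set {set T}}) (X : {set T}) (x : T) :
  W \subset P -> X \in P -> x \in X ->
  \sum_(Y in W) \sum_(y in Y) (e x y && ~~ heavy x y : nat) <=
    #|[set Y in W | h X Y]| * d.
Proof.
move=> sWP XP xX; rewrite -sum_nat_cond_const (bigID (h X)) /=.
rewrite [S in _ + S]big1 ?addn0 => [|Y /andP[YW not_hXY]].
  apply: leq_sum => Y /andP[YW _].
  have [heavy_xY | light_xY] := ltnP d (deg_in e x Y).
    rewrite big1 // => y yY.
    by rewrite /heavy (part_eq (subsetP sWP Y YW) yY) heavy_xY andbF.
  by apply: leq_trans light_xY; apply: leq_sum => y _; case: (e x y); rewrite ?leq_b1.
apply: big1 => y yY; apply/eqP; rewrite eqb0; apply: contraNN not_hXY => /andP[exy _].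
exact: h_edges XP (subsetP sWP Y YW) xX yY exy.
Qed.

Definition light_between (X Y : {set T}) : nat :=
  \sum_(x in X) \sum_(y in Y) (e x y && ~~ heavy x y : nat).

Lemma sum_light_adj_le : \sum_x \sum_y (e x y && ~~ heavy x y : nat) <= 2 * k * d * #|T|.
Proof.
have [_ sym] := e_simple.
have -> : \sum_x \sum_y (e x y && ~~ heavy x y : nat) =
    \sum_(X in P) \sum_(Y in P) light_between X Y.
  rewrite sum_over_parts; apply: eq_bigr => X _.
  rewrite /light_between [RHS]exchange_big.
  by apply: eq_bigr => x _; rewrite sum_over_parts.
rewrite -cardsT (card_partition P_part) -mulnA big_distrr /=.
apply: degenerate_sum_le h_degenerate _ _ => [X Y | W X sWP XW].
  rewrite /light_between exchange_big; apply: eq_bigr => y _; apply: eq_bigr => x _.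
  by rewrite sym /heavy orbC.
rewrite /light_between exchange_big /=.
apply: leq_trans (_ : \sum_(x in X) #|[set Y in W | h X Y]| * d <= _).
  by apply: leq_sum => x xX; apply: light_row_le => //; apply: subsetP XW.
by rewrite sum_nat_const mulnCA (mulnC #|X|).
Qed.

Lemma sum_adj_le : \sum_x \sum_y (e x y : nat) <= 2 * (k + 1) * d * #|T|.
Proof.
have split_adj : \sum_x \sum_y (e x y : nat) =
    \sum_x \sum_y (e x y && heavy x y : nat) +
    \sum_x \sum_y (e x y && ~~ heavy x y : nat).
  rewrite -big_split; apply: eq_bigr => x _; rewrite -big_split.
  by apply: eq_bigr => y _; case: (e x y); case: (heavy x y).
by rewrite split_adj; have := sum_heavy_adj_le; have := sum_light_adj_le; nia.
Qed.

End PartitionedGraph.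

Lemma part_graph_of_edge (T : finType) (e : rel T) (A B : {set T})
    (PA PB : {set {set T}}) (X Y : {set T}) (x y : T) :
  bipartite_with e A B -> partition PA A -> partition PB B ->
  X \in PA :|: PB -> Y \in PA :|: PB -> x \in X -> y \in Y -> e x y ->
  part_graph e PA PB X Y.
Proof.
move=> [AB0 _ bip] pA pB XP YP xX yY exy.
have dAB : [disjoint A & B] by rewrite -setI_eq0 AB0.
have memA := partitionU_mem_l pA pB dAB.
have memB Z z : Z \in PA :|: PB -> z \in Z -> z \in B -> Z \in PB.
  by rewrite setUC; apply: partitionU_mem_l pB pA _; rewrite disjoint_sym.
apply/andP; split.
  by case/orP: (bip x y exy) => /andP[xS yS];
    [rewrite (memA X x) ?(memB Y y) | rewrite (memB X x) ?(memA Y y) ?orbT].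
by apply/existsP; exists x; rewrite xX; apply/existsP; exists y; rewrite yY exy.
Qed.

Theorem lemma17 (k d : nat) (T : finType) (e : rel T) (A B : {set T})
    (PA PB : {set {set T}}) :
  4 <= k -> 4 <= d ->
  simple_graph e -> C4_free e -> bipartite_with e A B ->
  partition PA A -> partition PB B ->
  (forall X, X \in PA -> #|X| <= d ^ 2) ->
  (forall Y, Y \in PB -> #|Y| <= d ^ 2) ->
  degenerate (PA :|: PB) (part_graph e PA PB) k ->
  (avg_degree e <= (13 * k * d)%:R)%R.
Proof.
move=> k_ge4 d_ge4 e_simple e_C4 bipAB pA pB small_A small_B degH.
have [AB0 ABT _] := bipAB.
have P_part : partition (PA :|: PB) [set: T].
  by rewrite -ABT partitionU // -setI_eq0 AB0.
have P_small X : X \in PA :|: PB -> #|X| <= d ^ 2.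
  by case/setUP; [apply: small_A | apply: small_B].
have H_edges X Y x y := @part_graph_of_edge T e A B PA PB X Y x y bipAB pA pB.
apply: avg_degree_le; apply: leq_trans (double_card_edge_set_le e_simple) _.
have d_gt0 : 0 < d by apply: leq_trans d_ge4.
apply: leq_trans (sum_adj_le e_simple e_C4 P_part d_gt0 P_small degH H_edges) _.
by apply: leq_mul => //; apply: leq_mul => //; lia.
Qed.
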